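(* For every choice of parameters, the Data Revocation Game has at least one pure-strategy Nash equilibrium. Moreover, there exist parameter choices for which it has more than one pure-strategy Nash equilibrium.
   Context: Data Revocation Game: a finite set of users $\mathcal I=\{1,\dots,I\}$, $I\ge 2$. Each user $i$ has parameters $d_i^{\max}>0$, $\epsilon_i>0$, $\xi_i>0$, $\ell_i>0$, $\theta_i\ge 0$. Each user chooses $d_i\in[0,d_i^{\max}]$. Payoff $$U_i(d_i,\boldsymbol{d_{-i}})=\ln\Big(\sum_{j\in\mathcal I}d_j+\epsilon_i\Big)-\xi_i d_i\ell_i-\theta_i d_i\sum_{j\neq i}\Big(1-\frac{d_j}{d_j^{\max}}\Big)\ell_j^2 .$$ A Nash equilibrium is a profile $(d_i^* )$ with $d_i^*\in[0,d_i^{\max}]$ and $U_i(d_i^*,\boldsymbol{d_{-i}^*})\ge U_i(d_i,\boldsymbol{d_{-i}^*})$ for all $i$ and all $d_i\in[0,d_i^{\max}]$. *)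

From HB Require Import structures.
From mathcomp Require Import all_boot all_order all_algebra.
From mathcomp Require Import all_classical all_reals all_analysis.
Set Implicit Arguments. Unset Strict Implicit. Unset Printing Implicit Defensive.
Import Order.TTheory GRing.Theory Num.Theory.
Local Open Scope ring_scope.

Section DRG.
Variables (R : realType) (n : nat).

Definition payoff (dmax eps xi ell theta : 'I_n -> R) (d : 'I_n -> R) (i : 'I_n) : R :=
  ln (\sum_(j < n) d j + eps i) - xi i * d i * ell i
  - theta i * d i * \sum_(j < n | j != i) (1 - d j / dmax j) * ell j ^+ 2.

Definition deviate (d : 'I_n -> R) (i : 'I_n) (x : R) : 'I_n -> R :=
  fun j => if j == i then x else d j.

Definition feasible (dmax : 'I_n -> R) (d : 'I_n -> R) : Prop :=
  forall i, 0 <= d i <= dmax i.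

Definition is_NE (dmax eps xi ell theta : 'I_n -> R) (d : 'I_n -> R) : Prop :=
  feasible dmax d /\
  forall (i : 'I_n) (x : R), 0 <= x <= dmax i ->
    payoff dmax eps xi ell theta (deviate d i x) i <= payoff dmax eps xi ell theta d i.

Definition valid_params (dmax eps xi ell theta : 'I_n -> R) : Prop :=
  (1 < n)%N /\ (forall i, 0 < dmax i) /\ (forall i, 0 < eps i) /\
  (forall i, 0 < xi i) /\ (forall i, 0 < ell i) /\ (forall i, 0 <= theta i).

End DRG.

From mathcomp Require Import all_boot all_order all_algebra.
From mathcomp Require Import all_classical all_reals all_analysis.
From mathcomp Require Import ring lra.
Import Order.TTheory GRing.Theory Num.Theory.
Import numFieldNormedType.Exports.
Local Open Scope classical_set_scope.
Local Open Scope ring_scope.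

(* Each payoff is concave in the user's own strategy (ln is concave, the rest
   is linear in it), so a feasible profile satisfying the first-order (KKT)
   conditions is a Nash equilibrium.  The marginal payoff of user i depends on
   the others only through S = sum_j d_j and T = sum_j (ell_j^2 / dmax_j) d_j.
   For theta_i > 0 the KKT conditions determine d_i as a Lipschitz function of
   (S, T).  A user with theta_i = 0 is indifferent only at the level
   S = 1 / (xi_i ell_i) - eps_i; stacking the strategy intervals of these users
   below their levels makes their total a 1-Lipschitz nonincreasing function of
   the demand w of the other users.  Two nested intermediate value arguments
   then give an equilibrium: for fixed T the demand balance is strictly
   increasing in w, so its root w(T) is unique and Lipschitz in T, and a second
   IVT matches T with the weighted total of the resulting profile.
   Two users with theta = 0 and common level 1/2 are in equilibrium at every
   split of the total 1/2, so equilibria are not unique in general. *)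

Ltac no_minmax t := lazymatch t with
  | context [Num.min _ _] => fail
  | context [Num.max _ _] => fail
  | _ => idtac end.
Ltac minmax_step := match goal with
  | H : is_true (?x <= ?y) |- context [Num.min ?x ?y] => rewrite (min_l H)
  | H : is_true (?y < ?x) |- context [Num.min ?x ?y] => rewrite (min_r (ltW H))
  | H : is_true (?x <= ?y) |- context [Num.max ?x ?y] => rewrite (max_r H)
  | H : is_true (?y < ?x) |- context [Num.max ?x ?y] => rewrite (max_l (ltW H))
  | |- context [Num.min ?x ?y] =>
      no_minmax x; no_minmax y; case: (leP x y) => ?; try (exfalso; lra)
  | |- context [Num.max ?x ?y] =>
      no_minmax x; no_minmax y; case: (leP x y) => ?; try (exfalso; lra)
  end.
Ltac minmax := repeat minmax_step.

Section Intervals.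
Context {R : realType}.
Implicit Types (x y w a b L U X Y c M : R).

Definition clamp x M := Num.min (Num.max x 0) M.

Lemma clamp_ge0 x M : 0 <= M -> 0 <= clamp x M.
Proof. rewrite /clamp => h; minmax; lra. Qed.

Lemma clamp_le x M : 0 <= M -> clamp x M <= M.
Proof. rewrite /clamp => h; minmax; lra. Qed.

Lemma clamp_gt0_le [x M] : 0 < clamp x M -> clamp x M <= x.
Proof. rewrite /clamp; minmax; lra. Qed.

Lemma clamp_lt_ge [x M] : 0 <= M -> clamp x M < M -> x <= clamp x M.
Proof. rewrite /clamp => h; minmax; lra. Qed.

Lemma clamp_mono x y M : x <= y -> clamp x M <= clamp y M.
Proof. rewrite /clamp => h; minmax; lra. Qed.

Lemma clamp_lipschitz x y M : 0 <= M -> `|clamp x M - clamp y M| <= `|x - y|.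
Proof.
move=> h; have n1 : x - y <= `|x - y| := ler_norm _.
have n2 : y - x <= `|x - y| by rewrite distrC ler_norm.
rewrite ler_norml /clamp; apply/andP; split; minmax; lra.
Qed.

Definition overlap L U a b := Num.max 0 (Num.min b U - Num.max a L).

Lemma overlap_splitl L U L' U' a b : L' <= U' -> U <= L' ->
  overlap L U a b = overlap L U a (Num.min b L') + overlap L U (Num.max a U') b.
Proof.
move=> h1 h2; rewrite /overlap.
have -> : Num.min (Num.min b L') U = Num.min b U by rewrite -minA (min_r h2).
suff -> : Num.max 0 (Num.min b U - Num.max (Num.max a U') L) = 0 by rewrite addr0.
apply: max_l.
have : Num.min b U <= U by rewrite ge_min lexx orbT.
have : U' <= Num.max (Num.max a U') L by rewrite !le_max lexx ?orbT.
lra.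
Qed.

Lemma overlap_splitr L U L' U' a b : L' <= U' -> U' <= L ->
  overlap L U a b = overlap L U a (Num.min b L') + overlap L U (Num.max a U') b.
Proof.
move=> h1 h2; rewrite /overlap.
have -> : Num.max (Num.max a U') L = Num.max a L by rewrite -maxA (max_r h2).
suff -> : Num.max 0 (Num.min (Num.min b L') U - Num.max a L) = 0 by rewrite add0r.
apply: max_l.
have : Num.min (Num.min b L') U <= L' by rewrite !ge_min lexx ?orbT.
have : L <= Num.max a L by rewrite le_max lexx orbT.
lra.
Qed.

Lemma overlap_split_le L U a b : L <= U ->
  Num.max 0 (Num.min b L - a) + Num.max 0 (b - Num.max a U) + overlap L U a b
    <= Num.max 0 (b - a).
Proof. rewrite /overlap => h; minmax; lra. Qed.

Lemma clamp_subB_overlap U c w w' : w <= w' -> 0 <= c ->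
  clamp (U - w) c - clamp (U - w') c = overlap (U - c) U w w'.
Proof. rewrite /clamp /overlap => h1 h2; minmax; lra. Qed.

Lemma clamp_sub_overlap U c w X : U <= X -> 0 <= c ->
  clamp (U - w) c = overlap (U - c) U w X.
Proof. rewrite /clamp /overlap => h1 h2; minmax; lra. Qed.

Lemma clamp_subC_overlap U c w Y : Y <= U - c -> Y <= w -> 0 <= c ->
  c - clamp (U - w) c = overlap (U - c) U Y w.
Proof. rewrite /clamp /overlap => h1 h2 h3; minmax; lra. Qed.

Lemma sum_overlap_le (I : eqType) (L U : I -> R) (r : seq I) : uniq r ->
  (forall j, j \in r -> L j <= U j) ->
  (forall j k, j \in r -> k \in r -> j != k -> U j <= L k \/ U k <= L j) ->
  forall a b, \sum_(j <- r) overlap (L j) (U j) a b <= Num.max 0 (b - a).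
Proof.
elim: r => [|x r IH] /= => [_ _ _ a b|/andP[xr ur] hLU hsep a b].
  by rewrite big_nil le_max lexx.
have hLUr j : j \in r -> L j <= U j by move=> jr; apply: hLU; rewrite inE jr orbT.
have hsepr j k : j \in r -> k \in r -> j != k -> U j <= L k \/ U k <= L j.
  by move=> jr kr; apply: hsep; rewrite inE ?jr ?kr orbT.
have hx : L x <= U x by apply: hLU; rewrite inE eqxx.
(* The interval of x cuts [a, b] into a part below and a part above it. *)
have split_r : \sum_(j <- r) overlap (L j) (U j) a b =
    \sum_(j <- r) overlap (L j) (U j) a (Num.min b (L x))
  + \sum_(j <- r) overlap (L j) (U j) (Num.max a (U x)) b.
  rewrite -big_split /=; apply: eq_big_seq => j jr.
  have jx : j != x by apply: contraNneq xr => <-.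
  have := hsep j x; rewrite !inE jr eqxx orbT => /(_ isT isT jx) [] h.
    exact: overlap_splitl.
  exact: overlap_splitr.
rewrite big_cons split_r.
have := IH ur hLUr hsepr a (Num.min b (L x)).
have := IH ur hLUr hsepr (Num.max a (U x)) b.
have := @overlap_split_le (L x) (U x) a b hx.
lra.
Qed.

Lemma ler_sum_subpred (I : finType) (P Q : pred I) (F : I -> R) :
  (forall k, P k -> Q k) -> (forall k, 0 <= F k) ->
  \sum_(k | P k) F k <= \sum_(k | Q k) F k.
Proof.
move=> PQ F0; rewrite [leLHS]big_mkcond [leRHS]big_mkcond /=.
apply: ler_sum => k _; case: ifP => Pk; first by rewrite (PQ k Pk).
by case: ifP.
Qed.

Lemma norm_sumrB_le (I : finType) (P : pred I) (F G K : I -> R) x :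
  (forall i, P i -> `|F i - G i| <= K i * x) ->
  `|\sum_(i | P i) F i - \sum_(i | P i) G i| <= (\sum_(i | P i) K i) * x.
Proof.
move=> h; rewrite -sumrB mulr_suml; apply: le_trans (ler_norm_sum _ _ _) _.
by apply: ler_sum => i Pi; apply: h.
Qed.

End Intervals.

Section RealFacts.
Context {R : realType}.

Lemma klipschitz_continuous (K : R) (f : R -> R) : K.-lipschitz f -> continuous f.
Proof.
move=> fK x; apply/cvgrPdist_lt => e e0.
have K1 : 0 < `|K| + 1 by rewrite ltr_wpDl.
near=> y.
have xy : `|x - y| < e / (`|K| + 1).
  near: y; apply/nbhs_ballP; exists (e / (`|K| + 1)); first by rewrite /= divr_gt0.
  by move=> z; rewrite /ball /=.
have fxy : `|f x - f y| <= K * `|x - y| := fK (x, y) (conj I I).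
apply: le_lt_trans fxy _.
have : K * `|x - y| <= (`|K| + 1) * `|x - y|.
  by rewrite ler_wpM2r // (le_trans (ler_norm K)) // lerDl.
move/le_lt_trans; apply.
by rewrite mulrC -ltr_pdivlMr.
Unshelve. all: by end_near.
Qed.

Lemma IVT_lipschitz [K : R] [f : R -> R] [a b] : K.-lipschitz f ->
  a <= b -> f a <= 0 -> 0 <= f b -> exists2 c, a <= c <= b & f c = 0.
Proof.
move=> fK ab fa fb.
have f_cont : {within `[a, b], continuous f}.
  by apply: continuous_subspaceT; apply: klipschitz_continuous fK.
have f0 : Num.min (f a) (f b) <= 0 <= Num.max (f a) (f b).
  by rewrite ge_min le_max fa fb orbT.
have [c] := IVT ab f_cont f0.
by rewrite in_itv /= => abc fc; exists c.
Qed.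

Lemma ln_sub_le (A B : R) : 0 < A -> 0 < B -> ln A - ln B <= (A - B) / B.
Proof.
move=> A0 B0.
have AB0 : 0 < A / B by rewrite divr_gt0.
rewrite -[A in ln A](divfK (lt0r_neq0 B0)) lnM ?posrE // addrK.
rewrite mulrBl divff ?lt0r_neq0 //.
have AB1 : -1 < A / B - 1 by lra.
by have := le_ln1Dx AB1; rewrite addrC subrK.
Qed.

Lemma inv_max0_lipschitz (e s s' : R) : 0 < e ->
  `|(Num.max s 0 + e)^-1 - (Num.max s' 0 + e)^-1| <= (e * e)^-1 * `|s - s'|.
Proof.
move=> e0.
set u := Num.max s 0; set u' := Num.max s' 0.
have u0 : 0 <= u by rewrite le_max lexx orbT.
have u'0 : 0 <= u' by rewrite le_max lexx orbT.
have uu' : `|u' - u| <= `|s - s'|.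
  have := ler_norm (s - s'); have := ler_norm (s' - s); rewrite distrC.
  rewrite ler_norml /u /u'; move=> *; apply/andP; split; minmax; lra.
have -> : (u + e)^-1 - (u' + e)^-1 = (u' - u) * ((u + e) * (u' + e))^-1.
  by field; apply/andP; split; apply: lt0r_neq0; lra.
rewrite normrM [`|_^-1|]ger0_norm ?invr_ge0 ?mulr_ge0 //; try lra.
rewrite mulrC ler_pM ?invr_ge0 ?mulr_ge0 ?normr_ge0 //; try lra.
rewrite lef_pV2 ?posrE ?mulr_gt0 //; try lra.
by rewrite ler_pM //; lra.
Qed.

End RealFacts.

Section Game.
Variables (R : realType) (n : nat) (dmax eps xi ell theta : 'I_n -> R).
Hypotheses (dmax_gt0 : forall i, 0 < dmax i) (eps_gt0 : forall i, 0 < eps i)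
  (xi_gt0 : forall i, 0 < xi i) (ell_gt0 : forall i, 0 < ell i)
  (theta_ge0 : forall i, 0 <= theta i).

Local Notation U := (payoff dmax eps xi ell theta).
Implicit Types (d : 'I_n -> R) (i j k : 'I_n) (w s t x : R).

Definition total d := \sum_(j < n) d j.
Definition cost d i :=
  xi i * ell i + theta i * \sum_(j < n | j != i) (1 - d j / dmax j) * ell j ^+ 2.
Definition marginal d i := (total d + eps i)^-1 - cost d i.

Definition kkt d := forall i,
  (0 < d i -> 0 <= marginal d i) /\ (d i < dmax i -> marginal d i <= 0).

Lemma total_deviate d i x : \sum_(j < n) deviate d i x j = total d - d i + x.
Proof.
rewrite /total (bigD1 i) //= [in RHS](bigD1 i) //= /deviate eqxx.
rewrite (eq_bigr (fun j => d j)); last by move=> j /negbTE ->.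
lra.
Qed.

Lemma sum_neq_deviate (F : 'I_n -> R -> R) d i x :
  \sum_(j < n | j != i) F j (deviate d i x j) = \sum_(j < n | j != i) F j (d j).
Proof. by apply: eq_bigr => j /negbTE; rewrite /deviate => ->. Qed.

Lemma payoff_deviate_le d i x : (forall j, 0 <= d j) -> 0 <= x ->
  U (deviate d i x) i <= U d i + (x - d i) * marginal d i.
Proof.
move=> d0 x0.
have others0 : 0 <= total d - d i.
  rewrite /total (bigD1 i) //=.
  have : 0 <= \sum_(j < n | j != i) d j by apply: sumr_ge0.
  lra.
have A0 : 0 < total d - d i + x + eps i by have := eps_gt0 i; lra.
have B0 : 0 < total d + eps i by have := eps_gt0 i; have := d0 i; lra.
have := @ln_sub_le _ _ _ A0 B0.
have -> : (total d - d i + x + eps i - (total d + eps i)) / (total d + eps i)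
    = (x - d i) * (total d + eps i)^-1 by field; exact: lt0r_neq0.
rewrite /payoff total_deviate
  (sum_neq_deviate (fun j y => (1 - y / dmax j) * ell j ^+ 2)) /deviate eqxx.
rewrite /marginal /cost -/(total d).
lra.
Qed.

Lemma is_NE_of_kkt d : feasible dmax d -> kkt d -> is_NE dmax eps xi ell theta d.
Proof.
move=> dP dK; split => // i x /andP[x0 xm].
have d0 j : 0 <= d j by case/andP: (dP j).
apply: le_trans (payoff_deviate_le _ i _ d0 x0) _; rewrite gerDl.
have [dK0 dK1] := dK i.
case: (ltgtP x (d i)) => [xd|dx|->]; last by rewrite subrr mul0r.
- by rewrite mulr_le0_ge0 ?dK0 //; lra.
- by rewrite mulr_ge0_le0 ?dK1 //; lra.
Qed.

Definition weight j := ell j ^+ 2 / dmax j.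
Definition base_cost i := xi i * ell i + theta i * \sum_(j < n | j != i) ell j ^+ 2.
Definition weighted d := \sum_(j < n) weight j * d j.

Lemma weight_gt0 j : 0 < weight j.
Proof. by rewrite /weight divr_gt0 // exprn_gt0. Qed.

Lemma cost_weighted d i :
  cost d i = base_cost i - theta i * (weighted d - weight i * d i).
Proof.
have -> : weighted d - weight i * d i = \sum_(j < n | j != i) weight j * d j.
  rewrite /weighted (bigD1 i) //=; ring.
rewrite /cost /base_cost -addrA -mulrBr -sumrB.
congr (_ + _ * _); apply: eq_bigr => j _.
by rewrite /weight; field; exact: lt0r_neq0.
Qed.

(** * Users insensitive to the others' revocations *)

Definition theta0 i := theta i == 0.
Definition level i := (xi i * ell i)^-1 - eps i.

Lemma marginal_theta0 d i : theta0 i ->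
  marginal d i = (total d + eps i)^-1 - xi i * ell i.
Proof. by move=> /eqP th0; rewrite /marginal /cost th0 mul0r addr0. Qed.

Lemma is_NE_at_common_level d : (forall i, theta0 i) ->
  (forall i, level i = total d) -> feasible dmax d -> is_NE dmax eps xi ell theta d.
Proof.
move=> Z lv dP; apply: is_NE_of_kkt => // i.
rewrite marginal_theta0 // -(lv i) /level subrK invrK subrr.
by split=> _; rewrite lexx.
Qed.

Definition ahead j i := (level i < level j) || ((level j == level i) && (j < i)%N).

(* The strategy intervals [bottom i, top i] of the users with theta = 0 are
   stacked below their levels, in the order of decreasing level; at outside
   demand w such a user revokes the part of its interval lying above w. *)
Definition top i := level i - \sum_(k < n | theta0 k && ahead k i) dmax k.
Definition bottom i := top i - dmax i.
Definition fill w i := clamp (top i - w) (dmax i).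
Definition fill_total w := \sum_(i < n | theta0 i) fill w i.
Definition agg w := w + fill_total w.

Lemma ahead_irr i : ~~ ahead i i.
Proof. by rewrite /ahead ltxx ltnn andbF. Qed.

Lemma ahead_level [j i] : ahead j i -> level i <= level j.
Proof. by case/orP => [/ltW //|/andP[/eqP -> _]]. Qed.

Lemma ahead_trans [i j k] : ahead i j -> ahead j k -> ahead i k.
Proof.
rewrite /ahead => /orP[h1|/andP[/eqP h1 h1']] /orP[h2|/andP[/eqP h2 h2']].
- by rewrite (lt_trans h2 h1).
- by rewrite -h2 h1.
- by rewrite h1 h2.
- by rewrite h1 h2 eqxx (ltn_trans h1' h2') orbT.
Qed.

Lemma ahead_total [i j] : i != j -> ahead i j || ahead j i.
Proof.
move=> ij; rewrite /ahead.
case: (ltgtP (level i) (level j)) => h //=; rewrite ?orbT // ?h ?eqxx /=.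
by rewrite -(inj_eq val_inj) neq_ltn in ij.
Qed.

Lemma sum_ahead_self i : theta0 i ->
  \sum_(k < n | theta0 k && (ahead k i || (k == i))) dmax k =
  dmax i + \sum_(k < n | theta0 k && ahead k i) dmax k.
Proof.
move=> Zi; rewrite (bigD1 i) /=; last by rewrite Zi eqxx orbT.
congr (_ + _); apply: eq_bigl => k.
case: (eqVneq k i) => [->|ki]; first by rewrite (negbTE (ahead_irr i)) !andbF.
by rewrite orbF andbT.
Qed.

Lemma bottom_le_top i : bottom i <= top i.
Proof. by rewrite /bottom lerBlDr lerDl ltW. Qed.

Lemma top_le_bottom_ahead [j i] : theta0 j -> theta0 i -> ahead j i -> top i <= bottom j.
Proof.
move=> Zj Zi ji; rewrite /bottom /top.
have := ahead_level ji.
have : \sum_(k < n | theta0 k && (ahead k j || (k == j))) dmax k <=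
       \sum_(k < n | theta0 k && ahead k i) dmax k.
  apply: ler_sum_subpred => [k /andP[-> /orP[kj|/eqP ->]] //=|k].
    exact: ahead_trans kj ji.
  exact: ltW.
rewrite sum_ahead_self //.
lra.
Qed.

Lemma sum_overlap_theta0 (P : pred 'I_n) : (forall j, P j -> theta0 j) ->
  forall a b, \sum_(j | P j) overlap (bottom j) (top j) a b <= Num.max 0 (b - a).
Proof.
move=> PZ a b; rewrite -big_filter; apply: sum_overlap_le.
- by rewrite filter_uniq // index_enum_uniq.
- by move=> j _; exact: bottom_le_top.
move=> j k; rewrite !mem_filter => /andP[Pj _] /andP[Pk _] jk.
case/orP: (ahead_total jk) => h.
- by right; apply: top_le_bottom_ahead => //; apply: PZ.
- by left; apply: top_le_bottom_ahead => //; apply: PZ.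
Qed.

Lemma fill_ge0 w i : 0 <= fill w i.
Proof. exact/clamp_ge0/ltW. Qed.

Lemma fill_le w i : fill w i <= dmax i.
Proof. exact/clamp_le/ltW. Qed.

Lemma fill_total_ge0 w : 0 <= fill_total w.
Proof. by apply: sumr_ge0 => i _; exact: fill_ge0. Qed.

Lemma fill_total_nonincr [w w'] : w <= w' -> fill_total w' <= fill_total w.
Proof. by move=> ww'; apply: ler_sum => i _; apply: clamp_mono; lra. Qed.

Lemma fill_total_subB_le [w w'] : w <= w' -> fill_total w - fill_total w' <= w' - w.
Proof.
move=> ww'; rewrite /fill_total -sumrB.
rewrite (eq_bigr (fun j => overlap (bottom j) (top j) w w')); last first.
  by move=> j _; rewrite /fill clamp_subB_overlap //; exact: ltW.
apply: le_trans (@sum_overlap_theta0 theta0 (fun _ => id) w w') _.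
by rewrite ge_max lexx andbT; lra.
Qed.

Lemma agg_mono [w w'] : w <= w' -> agg w <= agg w'.
Proof. by move=> ww'; have := fill_total_subB_le ww'; rewrite /agg; lra. Qed.

Lemma agg_ge0 [w] : 0 <= w -> 0 <= agg w.
Proof. by move=> w0; have := fill_total_ge0 w; rewrite /agg; lra. Qed.

Lemma agg_lipschitz w w' : `|agg w - agg w'| <= `|w - w'|.
Proof.
wlog ww' : w w' / w <= w'.
  move=> H; case: (leP w w') => [|/ltW] h; first exact: H.
  by rewrite distrC [leRHS]distrC; apply: H.
have := fill_total_nonincr ww'; have := agg_mono ww'; rewrite /agg => ? ?.
by rewrite distrC [leRHS]distrC !ger0_norm; lra.
Qed.

Lemma fill_gt0_agg_le [w i] : theta0 i -> 0 < fill w i -> agg w <= level i.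
Proof.
move=> Zi fi0.
have wt : w < top i by have := clamp_gt0_le fi0; rewrite -/(fill w i); lra.
rewrite /agg /fill_total (bigID (ahead^~ i)) /=.
have : \sum_(j < n | theta0 j && ahead j i) fill w j
    <= \sum_(j < n | theta0 j && ahead j i) dmax j.
  by apply: ler_sum => j _; exact: fill_le.
have -> : \sum_(j < n | theta0 j && ~~ ahead j i) fill w j =
          \sum_(j < n | theta0 j && ~~ ahead j i) overlap (bottom j) (top j) w (top i).
  apply: eq_bigr => j /andP[Zj nji].
  rewrite /fill (@clamp_sub_overlap _ _ _ _ (top i)) //; last exact: ltW.
  case: (eqVneq j i) => [->|ji]; first exact: lexx.
  case/orP: (ahead_total ji) => h; first by rewrite h in nji.
  by have := top_le_bottom_ahead Zi Zj h; have := bottom_le_top i; lra.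
have := @sum_overlap_theta0 (fun j => theta0 j && ~~ ahead j i)
  (fun _ h => proj1 (andb_prop _ _ h)) w (top i).
rewrite max_r; last lra.
move: wt; rewrite /top; lra.
Qed.

Lemma fill_lt_agg_ge [w i] : theta0 i -> fill w i < dmax i -> level i <= agg w.
Proof.
move=> Zi fi.
have bw : bottom i <= w.
  by have := clamp_lt_ge (ltW (dmax_gt0 i)) fi; rewrite -/(fill w i) /bottom; lra.
set P := fun j => theta0 j && (ahead j i || (j == i)).
have : \sum_(j < n | P j) fill w j <= fill_total w.
  by apply: ler_sum_subpred => [k /andP[]|k] //; exact: fill_ge0.
have -> : \sum_(j < n | P j) fill w j =
          \sum_(j < n | P j) (dmax j - overlap (bottom j) (top j) (bottom i) w).
  apply: eq_bigr => j /andP[Zj hj].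
  rewrite /fill -(@clamp_subC_overlap _ _ _ _ (bottom i)) //; [ring| |exact: ltW].
  case/orP: hj => [h|/eqP ->]; last by rewrite /bottom.
  by have := top_le_bottom_ahead Zj Zi h; have := bottom_le_top i; rewrite /bottom; lra.
have := @sum_overlap_theta0 P (fun _ h => proj1 (andb_prop _ _ h)) (bottom i) w.
rewrite max_r; last lra.
rewrite sumrB sum_ahead_self // /agg /bottom /top; lra.
Qed.

(** * Users sensitive to the others' revocations *)

(* Marginal payoff of a user with theta i > 0 at aggregates S = s and T = t,
   up to its own term - theta i * weight i * d i; [Num.max s 0] makes it
   Lipschitz in s everywhere, only s >= 0 occurs. *)
Definition marginal_at s t i := (Num.max s 0 + eps i)^-1 - base_cost i + theta i * t.

Lemma marginal_at_den_gt0 s i : 0 < Num.max s 0 + eps i.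
Proof. by rewrite ltr_wpDl ?eps_gt0 // le_max lexx orbT. Qed.

Definition reply s t i := clamp (marginal_at s t i / (theta i * weight i)) (dmax i).

Definition profile w t i := if theta0 i then fill w i else reply (agg w) t i.
Definition gap w t := w - \sum_(i < n | ~~ theta0 i) reply (agg w) t i.

Lemma theta_gt0 [i] : ~~ theta0 i -> 0 < theta i.
Proof. by rewrite lt_def theta_ge0 andbT. Qed.

Lemma scale_gt0 [i] : ~~ theta0 i -> 0 < theta i * weight i.
Proof. by move=> /theta_gt0 th0; rewrite mulr_gt0 ?weight_gt0. Qed.

Lemma reply_ge0 s t i : 0 <= reply s t i.
Proof. exact/clamp_ge0/ltW. Qed.

Lemma reply_le s t i : reply s t i <= dmax i.
Proof. exact/clamp_le/ltW. Qed.

Lemma profile_ge0 w t i : 0 <= profile w t i.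
Proof. by rewrite /profile; case: ifP => _; [exact: fill_ge0|exact: reply_ge0]. Qed.

Lemma profile_le w t i : profile w t i <= dmax i.
Proof. by rewrite /profile; case: ifP => _; [exact: fill_le|exact: reply_le]. Qed.

Lemma reply_nonincr s s' t i : ~~ theta0 i -> s <= s' -> reply s' t i <= reply s t i.
Proof.
move=> /scale_gt0 p ss'; apply: clamp_mono.
rewrite ler_pM2r ?invr_gt0 // /marginal_at !lerD2r.
rewrite lef_pV2 ?posrE ?marginal_at_den_gt0 // lerD2r.
by move: ss'; minmax; lra.
Qed.

Definition lip_reply i := (eps i * eps i)^-1 / (theta i * weight i).

Lemma lip_reply_ge0 i : ~~ theta0 i -> 0 <= lip_reply i.
Proof.
move=> /scale_gt0 p; apply: divr_ge0 (ltW p).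
by rewrite invr_ge0 mulr_ge0 // ltW.
Qed.

Lemma reply_lipschitz_s s s' t i : ~~ theta0 i ->
  `|reply s t i - reply s' t i| <= lip_reply i * `|s - s'|.
Proof.
move=> /scale_gt0 p; apply: le_trans (clamp_lipschitz _ _ _ (ltW (dmax_gt0 i))) _.
rewrite -mulrBl normrM [`|_^-1|]ger0_norm ?invr_ge0 ?(ltW p) //.
rewrite /lip_reply mulrAC ler_pM2r ?invr_gt0 //.
have -> : marginal_at s t i - marginal_at s' t i =
    (Num.max s 0 + eps i)^-1 - (Num.max s' 0 + eps i)^-1 by rewrite /marginal_at; ring.
exact: inv_max0_lipschitz.
Qed.

Lemma reply_lipschitz_t s t t' i : ~~ theta0 i ->
  `|reply s t i - reply s t' i| <= (weight i)^-1 * `|t - t'|.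
Proof.
move=> Pi; apply: le_trans (clamp_lipschitz _ _ _ (ltW (dmax_gt0 i))) _.
have -> : marginal_at s t i / (theta i * weight i) - marginal_at s t' i / (theta i * weight i)
    = (weight i)^-1 * (t - t').
  rewrite /marginal_at; field.
  by rewrite ?lt0r_neq0 ?marginal_at_den_gt0 ?weight_gt0 ?theta_gt0.
by rewrite normrM ger0_norm // invr_ge0 ltW // weight_gt0.
Qed.

Lemma gap_incr [w w'] t : w <= w' -> w' - w <= gap w' t - gap w t.
Proof.
move=> ww'; have aw := agg_mono ww'.
have : \sum_(i < n | ~~ theta0 i) reply (agg w') t i
    <= \sum_(i < n | ~~ theta0 i) reply (agg w) t i.
  by apply: ler_sum => i Pi; apply: reply_nonincr.
rewrite /gap; lra.
Qed.

Definition lip_gap := \sum_(i < n | ~~ theta0 i) (weight i)^-1.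

Lemma gap_lipschitz_t w t t' : `|gap w t - gap w t'| <= lip_gap * `|t - t'|.
Proof.
have -> : gap w t - gap w t' = \sum_(i < n | ~~ theta0 i) reply (agg w) t' i
    - \sum_(i < n | ~~ theta0 i) reply (agg w) t i by rewrite /gap; ring.
apply: norm_sumrB_le => i Pi.
by rewrite distrC; apply: reply_lipschitz_t.
Qed.

Lemma gap_lipschitz_w t :
  (1 + \sum_(i < n | ~~ theta0 i) lip_reply i).-lipschitz (gap^~ t).
Proof.
move=> [w w'] _ /=.
have : `|\sum_(i < n | ~~ theta0 i) reply (agg w) t i
        - \sum_(i < n | ~~ theta0 i) reply (agg w') t i|
      <= (\sum_(i < n | ~~ theta0 i) lip_reply i) * `|w - w'|.
  apply: norm_sumrB_le => i Pi.
  apply: le_trans (reply_lipschitz_s _ _ _ _ Pi) _.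
  by rewrite ler_wpM2l ?lip_reply_ge0 // agg_lipschitz.
have -> : gap w t - gap w' t = (w - w') - (\sum_(i < n | ~~ theta0 i) reply (agg w) t i
    - \sum_(i < n | ~~ theta0 i) reply (agg w') t i) by rewrite /gap; ring.
have := ler_normB (w - w') (\sum_(i < n | ~~ theta0 i) reply (agg w) t i
    - \sum_(i < n | ~~ theta0 i) reply (agg w') t i).
rewrite mulrDl mul1r; lra.
Qed.

Lemma gap_root_exists t : exists w, 0 <= w /\ gap w t = 0.
Proof.
set W := \sum_(i < n | ~~ theta0 i) dmax i.
have W0 : 0 <= W by apply: sumr_ge0 => i _; exact: ltW.
have gap0 : gap 0 t <= 0.
  by rewrite /gap add0r oppr_le0; apply: sumr_ge0 => i _; exact: reply_ge0.
have gapW : 0 <= gap W t.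
  by rewrite /gap subr_ge0; apply: ler_sum => i _; exact: reply_le.
have [w /andP[w0 _] gw] := IVT_lipschitz (gap_lipschitz_w t) W0 gap0 gapW.
by exists w.
Qed.

(* The root is unique since gap increases with slope at least one. *)
Definition inner_root t := projT1 (cid (gap_root_exists t)).

Lemma inner_rootP t : 0 <= inner_root t /\ gap (inner_root t) t = 0.
Proof. exact: projT2 (cid (gap_root_exists t)). Qed.

Lemma inner_root_lipschitz t t' :
  `|inner_root t - inner_root t'| <= lip_gap * `|t - t'|.
Proof.
wlog le_tt' : t t' / inner_root t <= inner_root t'.
  move=> H; case: (leP (inner_root t) (inner_root t')) => [|/ltW] h; first exact: H.
  by rewrite distrC [`|t - t'|]distrC; apply: H.
have [_ g] := inner_rootP t; have [_ g'] := inner_rootP t'.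
have lip := gap_lipschitz_t (inner_root t') t t'; rewrite g' subr0 in lip.
have incr := gap_incr t le_tt'; rewrite g subr0 in incr.
have nrm := ler_norm (gap (inner_root t') t).
by rewrite distrC ger0_norm ?subr_ge0 //; lra.
Qed.

Definition lip_profile i :=
  if theta0 i then lip_gap else lip_reply i * lip_gap + (weight i)^-1.

Lemma profile_lipschitz i t t' :
  `|profile (inner_root t) t i - profile (inner_root t') t' i| <= lip_profile i * `|t - t'|.
Proof.
rewrite /profile /lip_profile; case: ifP => Zi.
  apply: le_trans (clamp_lipschitz _ _ _ (ltW (dmax_gt0 i))) _.
  have -> : top i - inner_root t - (top i - inner_root t') = inner_root t' - inner_root t.
    by ring.
  by rewrite distrC inner_root_lipschitz.
have Pi : ~~ theta0 i by rewrite Zi.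
set r := inner_root t; set r' := inner_root t'.
have := ler_normD (reply (agg r) t i - reply (agg r') t i)
                  (reply (agg r') t i - reply (agg r') t' i).
have -> : reply (agg r) t i - reply (agg r') t i + (reply (agg r') t i - reply (agg r') t' i)
    = reply (agg r) t i - reply (agg r') t' i by ring.
have := reply_lipschitz_t (agg r') t t' i Pi.
have : lip_reply i * `|agg r - agg r'| <= lip_reply i * (lip_gap * `|t - t'|).
  by rewrite ler_wpM2l ?lip_reply_ge0 // (le_trans (agg_lipschitz _ _)) ?inner_root_lipschitz.
have := reply_lipschitz_s (agg r) (agg r') t i Pi.
rewrite mulrDl -mulrA; lra.
Qed.

Definition balance t := t - weighted (profile (inner_root t) t).

Lemma balance_lipschitz :
  (1 + \sum_(i < n) weight i * lip_profile i).-lipschitz balance.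
Proof.
move=> [t t'] _ /=.
have : `|weighted (profile (inner_root t) t) - weighted (profile (inner_root t') t')|
    <= (\sum_(i < n) weight i * lip_profile i) * `|t - t'|.
  apply: norm_sumrB_le => i _.
  rewrite -mulrBr normrM ger0_norm ?(ltW (weight_gt0 i)) // -mulrA.
  by rewrite ler_wpM2l ?(ltW (weight_gt0 i)) ?profile_lipschitz.
have := ler_normB (t - t')
  (weighted (profile (inner_root t) t) - weighted (profile (inner_root t') t')).
have -> : t - t' - (weighted (profile (inner_root t) t)
    - weighted (profile (inner_root t') t')) = balance t - balance t'.
  by rewrite /balance; ring.
rewrite mulrDl mul1r; lra.
Qed.

Lemma balance_root_exists : exists t, balance t = 0.
Proof.
set T := \sum_(i < n) weight i * dmax i.
have weighted_ge0 w t : 0 <= weighted (profile w t).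
  by apply: sumr_ge0 => i _; rewrite mulr_ge0 ?profile_ge0 // ltW ?weight_gt0.
have weighted_le w t : weighted (profile w t) <= T.
  by apply: ler_sum => i _; rewrite ler_wpM2l ?profile_le // ltW ?weight_gt0.
have T0 : 0 <= T by apply: le_trans (weighted_le 0 0).
have b0 : balance 0 <= 0 by rewrite /balance add0r oppr_le0.
have bT : 0 <= balance T by rewrite /balance subr_ge0.
by have [t _ bt] := IVT_lipschitz balance_lipschitz T0 b0 bT; exists t.
Qed.

Section Equilibrium.
Variable t : R.
Hypothesis balance_t : balance t = 0.
Let w := inner_root t.
Let d := profile w t.

Lemma total_profile : total d = agg w.
Proof.
have [_ gw] := inner_rootP t.
rewrite /total (bigID theta0) /=.
have -> : \sum_(i < n | theta0 i) d i = fill_total w.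
  by apply: eq_bigr => i Zi; rewrite /d /profile Zi.
have -> : \sum_(i < n | ~~ theta0 i) d i = \sum_(i < n | ~~ theta0 i) reply (agg w) t i.
  by apply: eq_bigr => i /negbTE Zi; rewrite /d /profile Zi.
by move: gw; rewrite /gap /agg -/w; lra.
Qed.

Lemma weighted_profile : weighted d = t.
Proof. by move: balance_t; rewrite /balance -/w -/d; lra. Qed.

Lemma kkt_theta0 i : theta0 i -> (0 < d i -> 0 <= marginal d i) /\
                                  (d i < dmax i -> marginal d i <= 0).
Proof.
move=> Zi; rewrite marginal_theta0 // total_profile /d /profile Zi.
have [w0 _] := inner_rootP t.
have xl0 : 0 < xi i * ell i by rewrite mulr_gt0.
have s0 : 0 < agg w + eps i by have := agg_ge0 w0; have := eps_gt0 i; lra.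
rewrite !subr_ge0 !subr_le0.
split => [/(fill_gt0_agg_le Zi)|/(fill_lt_agg_ge Zi)]; rewrite /level => h.
  by rewrite -[xi i * ell i]invrK lef_pV2 ?posrE ?invr_gt0 //; lra.
by rewrite -[xi i * ell i]invrK lef_pV2 ?posrE ?invr_gt0 //; lra.
Qed.

Lemma kkt_theta_pos i : ~~ theta0 i -> (0 < d i -> 0 <= marginal d i) /\
                                       (d i < dmax i -> marginal d i <= 0).
Proof.
move=> Pi; have p := scale_gt0 Pi.
have [w0 _] := inner_rootP t.
have -> : marginal d i = marginal_at (agg w) t i - theta i * weight i * d i.
  rewrite /marginal cost_weighted total_profile weighted_profile /marginal_at.
  by rewrite max_l ?agg_ge0 //; ring.
have -> : d i = reply (agg w) t i by rewrite /d /profile (negbTE Pi).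
rewrite subr_ge0 subr_le0 [_ * reply _ _ _]mulrC.
split => [d0|dlt].
  by rewrite -ler_pdivlMr //; exact: clamp_gt0_le d0.
by rewrite -ler_pdivrMr //; exact: clamp_lt_ge (ltW (dmax_gt0 i)) dlt.
Qed.

Lemma kkt_profile : kkt d.
Proof.
by move=> i; case Zi: (theta0 i); [apply: kkt_theta0|apply: kkt_theta_pos; rewrite Zi].
Qed.

End Equilibrium.

Theorem exists_NE : exists d, is_NE dmax eps xi ell theta d.
Proof.
have [t bt] := balance_root_exists.
exists (profile (inner_root t) t); apply: is_NE_of_kkt; last exact: kkt_profile.
by move=> i; rewrite profile_ge0 profile_le.
Qed.

End Game.

Theorem lemma2 (R : realType) :
  (forall (n : nat) (dmax eps xi ell theta : 'I_n -> R),
      valid_params dmax eps xi ell theta ->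
      exists d : 'I_n -> R, is_NE dmax eps xi ell theta d) /\
  (exists (n : nat) (dmax eps xi ell theta : 'I_n -> R),
      valid_params dmax eps xi ell theta /\
      exists d1 d2 : 'I_n -> R,
        d1 <> d2 /\ is_NE dmax eps xi ell theta d1 /\ is_NE dmax eps xi ell theta d2).
Proof.
split=> [n dmax eps xi ell theta [_ [dmax_gt0 [eps_gt0 [xi_gt0 [ell_gt0 theta_ge0]]]]]|].
  exact: exists_NE.
pose half (k : 'I_2) : 'I_2 -> R := fun j => if j == k then 1 / 2 else 0.
have half_NE k :
    is_NE (fun _ => 1) (fun _ => 1 / 2) (fun _ => 1) (fun _ => 1) (fun _ => 0) (half k).
  apply: is_NE_at_common_level => [i|i|i|i].
  - lra.
  - by rewrite /theta0.
  - rewrite /level /total big_ord_recl big_ord1 /half mulr1 invr1.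
    by case: k => [[|[|]]] //= _; lra.
  - by rewrite /half; case: ifP => _; lra.
exists 2, (fun _ => 1), (fun _ => 1 / 2), (fun _ => 1), (fun _ => 1), (fun _ => 0).
split; first by rewrite /valid_params; repeat split; try done; move=> i; lra.
exists (half ord0), (half ord_max); split; last by split; apply: half_NE.
by move/(congr1 (fun d => d ord0)); rewrite /half eqxx /=; lra.
Qed.
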